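(* Let $G$ be a full Frobenius group of finite Morley rank with proper full Frobenius complement $B$. Then every finite subgroup and every soluble subgroup of $G$ is contained in some conjugate of $B$. In particular, $G$ has no non-trivial finite normal subgroup and no non-trivial soluble normal subgroup.
   Context: A subgroup $B$ of a group $G$ is malnormal if $B\cap B^g=\{1\}$ for all $g\in G\setminus B$. A full Frobenius complement of a group $G$ of finite Morley rank is a definable malnormal subgroup of $G$ whose conjugates $B^g$ ($g\in G$) cover $G$. A group $G$ of finite Morley rank is a full Frobenius group if it has a proper full Frobenius complement $B$; the conjugates of $B$ are then called the Borel subgroups of $G$. *)

From Stdlib Require List.
From mathcomp Require Import all_boot.
Set Implicit Arguments.
Unset Strict Implicit.
Unset Printing Implicit Defensive.

(** A group of finite Morley rank is presented (as in Borovik–Nesin, "Groups of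
  Finite Morley Rank", Ch. 4) as a group [G] together with a universe of
  definable sets (subsets of the powers [G^n], with parameters) and a rank
  function with values in [nat] satisfying the Borovik–Poizat rank axioms. *)

Definition tset (G : Type) (n : nat) := ('I_n -> G) -> Prop.

Definition lpart (G : Type) n m (x : 'I_(n + m) -> G) : 'I_n -> G :=
  fun j => x (lshift m j).
Definition rpart (G : Type) n m (x : 'I_(n + m) -> G) : 'I_m -> G :=
  fun k => x (rshift n k).
Definition tcat (G : Type) n m (a : 'I_n -> G) (b : 'I_m -> G) : 'I_(n + m) -> G :=
  fun i => match split i with inl j => a j | inr k => b k end.

Definition nonempty {T : Type} (X : T -> Prop) := exists x, X x.
Definition finite_set {T : Type} (X : T -> Prop) :=
  exists s : seq T, forall x, X x -> List.In x s.
Definition infinite_set {T : Type} (X : T -> Prop) := ~ finite_set X.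
Definition card_gt {T : Type} (X : T -> Prop) (m : nat) :=
  exists s : seq T, List.NoDup s /\ m < size s /\ (forall x, List.In x s -> X x).

Definition i3_0 : 'I_3 := @Ordinal 3 0 isT.
Definition i3_1 : 'I_3 := @Ordinal 3 1 isT.
Definition i3_2 : 'I_3 := @Ordinal 3 2 isT.
Definition i2_0 : 'I_2 := @Ordinal 2 0 isT.
Definition i2_1 : 'I_2 := @Ordinal 2 1 isT.
Definition i1_0 : 'I_1 := @Ordinal 1 0 isT.

Record ranked_group := RankedGroup {
  rg_carrier :> Type;
  rg_mul : rg_carrier -> rg_carrier -> rg_carrier;
  rg_inv : rg_carrier -> rg_carrier;
  rg_one : rg_carrier;
  rg_def : forall n, tset rg_carrier n -> Prop;
  rg_rk  : forall n, tset rg_carrier n -> nat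
}.

Arguments rg_def r n _ : clear implicits.
Arguments rg_mul r _ _ : clear implicits.
Arguments rg_inv r _ : clear implicits.
Arguments rg_one r : clear implicits.
Arguments rg_rk r n _ : clear implicits.

Section Defs.
Variable G : ranked_group.
Local Notation mul := (rg_mul G).
Local Notation inv := (rg_inv G).
Local Notation one := (rg_one G).
Local Notation Def := (rg_def G).
Local Notation rk := (rg_rk G).

Definition is_group : Prop :=
  (forall x y z, mul x (mul y z) = mul (mul x y) z) /\
  (forall x, mul one x = x) /\
  (forall x, mul (inv x) x = one).

Definition is_universe : Prop :=
  (forall n, Def n (fun _ => True)) /\
  (forall n (X Y : tset G n), Def n X -> Def n Y -> Def n (fun x => X x /\ Y x)) /\
  (forall n (X : tset G n), Def n X -> Def n (fun x => ~ X x)) /\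
  (forall n m (X : tset G n) (Y : tset G m), Def n X -> Def m Y ->
      Def (n + m) (fun x => X (lpart x) /\ Y (rpart x))) /\
  (forall n m (X : tset G (n + m)), Def (n + m) X ->
      Def n (fun a => exists b, X (tcat a b))) /\
  (forall n m (s : 'I_m -> 'I_n) (X : tset G m), Def m X ->
      Def n (fun x => X (fun i => x (s i)))) /\
  (forall a : G, Def 1 (fun x => x i1_0 = a)) /\
  Def 2 (fun x => x i2_0 = x i2_1) /\
  Def 3 (fun x => mul (x i3_0) (x i3_1) = x i3_2).

Definition def_map n m (A : tset G n) (B : tset G m) (f : ('I_n -> G) -> ('I_m -> G)) :=
  Def n A /\ Def m B /\ (forall a, A a -> B (f a)) /\
  Def (n + m) (fun x => A (lpart x) /\ f (lpart x) = rpart x).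

Definition fiber n m (A : tset G n) (f : ('I_n -> G) -> ('I_m -> G)) (b : 'I_m -> G) :
  tset G n := fun a => A a /\ f a = b.

(* Borovik–Poizat rank axioms (rank defined on nonempty definable sets). *)
Definition rank_axioms : Prop :=
  (forall n (A : tset G n), Def n A -> nonempty A -> forall k,
     k < rk n A <->
     exists Y : nat -> tset G n,
       (forall i, Def n (Y i) /\ nonempty (Y i) /\ (forall x, Y i x -> A x)
                  /\ k <= rk n (Y i)) /\
       (forall i j, i <> j -> forall x, Y i x -> Y j x -> False)) /\
  (forall n m A B f, @def_map n m A B f -> forall k,
     Def m (fun b => B b /\ nonempty (fiber A f b) /\ rk n (fiber A f b) = k)) /\
  (forall n m A B f k, @def_map n m A B f -> nonempty A ->
     (forall b, B b -> nonempty (fiber A f b) /\ rk n (fiber A f b) = k) ->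
     rk n A = rk m B + k) /\
  (forall n m A B f, @def_map n m A B f -> exists M, forall b, B b ->
     (infinite_set (fiber A f b) <-> card_gt (fiber A f b) M)).

Definition finite_Morley_rank_group : Prop :=
  is_group /\ is_universe /\ rank_axioms.

Definition subgroup (H : G -> Prop) : Prop :=
  H one /\ (forall x y, H x -> H y -> H (mul x y)) /\ (forall x, H x -> H (inv x)).

Definition definable_subset (H : G -> Prop) : Prop := Def 1 (fun x => H (x i1_0)).

(* conjugate B^g = g^-1 B g, i.e. x \in B^g iff g x g^-1 \in B *)
Definition conjugate (B : G -> Prop) (g : G) : G -> Prop :=
  fun x => B (mul (mul g x) (inv g)).

Definition malnormal (B : G -> Prop) : Prop :=
  forall g, ~ B g -> forall x, B x -> conjugate B g x -> x = one.

Definition full_frobenius_complement (B : G -> Prop) : Prop :=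
  subgroup B /\ definable_subset B /\ malnormal B /\
  (forall x, exists g, conjugate B g x).

Definition comm (a b : G) : G := mul (mul (mul (inv a) (inv b)) a) b.

Definition derived (H : G -> Prop) : G -> Prop :=
  fun x => forall K, subgroup K ->
    (forall a b, H a -> H b -> K (comm a b)) -> K x.

Definition soluble (H : G -> Prop) : Prop :=
  subgroup H /\ exists n, forall x, iter n derived H x -> x = one.

Definition normal (N : G -> Prop) : Prop :=
  subgroup N /\ forall g x, N x -> N (mul (mul g x) (inv g)).

End Defs.

From HB Require Import structures.
From mathcomp Require Import all_boot all_fingroup frobenius zify boolp.
From Stdlib Require Import Classical.
Set Implicit Arguments. Unset Strict Implicit. Unset Printing Implicit Defensive.
Local Open Scope group_scope.

(* If x <> 1
   and both x and x^s lie in a conjugate B^g, malnormality forces s into B^g;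
   so any subgroup normalising a non-trivial subgroup of B^g lies in B^g. For a
   soluble H this applies to the last non-trivial term of its derived series,
   or, when H is abelian, to any non-trivial element; for a normal subgroup
   inside B^g it would force G = B^g. A finite subgroup H is covered by the
   traces of the conjugates of B, which are malnormal in H and meet trivially;
   a Frobenius-type count shows that one of them is all of H. *)

Lemma In_mem (T : eqType) (x : T) (s : seq T) : List.In x s -> x \in s.
Proof.
by elim: s => //= y s IHs [-> | /IHs]; rewrite in_cons ?eqxx // => ->; rewrite orbT.
Qed.

Section MalnormalCover.
Variable gT : finGroupType.

Lemma malnormal_normedTI (K : {group gT}) :
  K :!=: 1 -> (forall h y, y != 1 -> y \in K -> y ^ h \in K -> h \in K) ->
  normedTI K^# setT K.
Proof.
move=> /trivgPn[y Ky nty] malK; apply/normedTI_memJ_P.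
split; [by apply/set0Pn; exists y; rewrite !inE nty | exact: subsetT |].
move=> a g /setD1P[nta Ka] _; apply/idP/idP => [/setD1P[_]|Kg].
  exact: malK.
by rewrite !inE groupJ // andbT conjg_eq1.
Qed.

Lemma card_class_support_malnormal (K : {group gT}) :
  K :!=: 1 -> (forall h y, y != 1 -> y \in K -> y ^ h \in K -> h \in K) ->
  #|class_support K^# setT| = #|[set: gT]| - #|setT : K|.
Proof.
move=> ntK malK; rewrite (card_support_normedTI (malnormal_normedTI ntK malK)).
by rewrite -(Lagrange (subsetT K)) (cardsD1 1 K) group1 mulSn addKn.
Qed.

Lemma indexg_malnormal_bounds (K : {group gT}) :
  K :!=: 1 -> K :!=: setT -> 1 < #|setT : K| /\ 2 * #|setT : K| <= #|[set: gT]|.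
Proof.
move=> ntK nTK; split; first by rewrite indexg_gt1 subTset.
by rewrite -(Lagrange (subsetT K)) leq_mul2r cardG_gt1 ntK orbT.
Qed.

(* Two non-conjugate proper members would have disjoint class supports, each
   of size at least |G|/2, leaving no room for the identity. *)
Lemma malnormal_cover_full (I : Type) (K : I -> {group gT}) :
  (forall x, exists i, x \in K i) ->
  (forall i j y, y != 1 -> y \in K i -> y \in K j -> K i :=: K j) ->
  (forall i h, exists j, K i :^ h = K j) ->
  (forall i h y, y != 1 -> y \in K i -> y ^ h \in K i -> h \in K i) ->
  exists i, K i :=: setT.
Proof.
move=> coverK uniqK conjK malK; apply: NNPP => noFull.
have nTK i : K i :!=: setT by apply/eqP => KiT; apply: noFull; exists i.
pose S i := class_support (K i)^# setT.
have notin1S i : 1 \notin S i.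
  by apply/imset2P=> -[a g /setD1P[nta _] _ /esym/eqP]; rewrite conjg_eq1 (negPf nta).
have cardS i y : y != 1 -> y \in K i ->
    #|S i| = #|[set: gT]| - #|setT : K i| /\
    1 < #|setT : K i| /\ 2 * #|setT : K i| <= #|[set: gT]|.
  move=> nty Ky; have ntK : K i :!=: 1 by apply/trivgPn; exists y.
  rewrite (card_class_support_malnormal ntK (malK i)).
  by split; last exact: indexg_malnormal_bounds.
have [x ntx] : exists x : gT, x != 1.
  apply: NNPP => triv; have [i K1] := coverK 1; apply: noFull; exists i.
  apply/setP=> z; rewrite inE; have [-> // | ntz] := eqVneq z 1.
  by exfalso; apply: triv; exists z.
have [i Kx] := coverK x; have [cS1 [gt1 le1]] := cardS i x ntx Kx.
have: ~~ ([set: gT] \subset 1 |: S i).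
  apply/negP => /subset_leq_card; rewrite cardsU1 notin1S cS1 /=.
  (* [set] unifies copies of #|[set: gT]| that differ in hidden coercions,
     which lia would otherwise treat as distinct atoms. *)
  by set N := #|[set: gT]| in le1 *; lia.
case/subsetPn=> y _; rewrite !inE negb_or => /andP[nty nSiy].
have [j Ky] := coverK y; have [cS2 [_ le2]] := cardS j y nty Ky.
have disjS : [disjoint S i & S j].
  apply/pred0P=> z; rewrite /= /S; apply/negbTE/negP.
  case/andP=> /imset2P[a g Ka _ ->] /imset2P[b h Kb _ Eab].
  case/setD1P: Ka => nta Ka; case/setD1P: Kb => ntb Kb.
  have [i' Ei] := conjK i g; have [j' Ej] := conjK j h.
  have Eij : K i :^ g = K j :^ h.
    rewrite Ei Ej; apply: (uniqK _ _ (a ^ g)); first by rewrite conjg_eq1.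
      by rewrite -Ei memJ_conjg.
    by rewrite -Ej Eab memJ_conjg.
  have /imsetP[c Kc Eyc] : y ^ h \in K i :^ g by rewrite Eij memJ_conjg.
  case/negP: nSiy; apply/imset2P; exists c (g * h^-1) => //.
    by rewrite !inE Kc andbT -(conjg_eq1 _ g) -Eyc conjg_eq1.
  by rewrite conjgM -Eyc conjgK.
have := subset_leq_card (subsetT (1 |: (S i :|: S j))).
rewrite cardsU1 !inE negb_or !notin1S cardsU (disjoint_setI0 disjS) cards0 /=.
by rewrite cS1 cS2; set N := #|[set: gT]| in le1 le2 *; lia.
Qed.
End MalnormalCover.

Section RankedGroup.
Variable G : ranked_group.
Hypothesis HG : is_group G.

Let mulA : associative (rg_mul G). Proof. by case: HG. Qed.
Let mul1 : left_id (rg_one G) (rg_mul G). Proof. by case: HG => _ []. Qed.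
Let mulV : left_inverse (rg_one G) (rg_inv G) (rg_mul G). Proof. by case: HG => _ []. Qed.
Let mulrV : right_inverse (rg_one G) (rg_inv G) (rg_mul G).
Proof.
move=> x; rewrite -[LHS]mul1 -(mulV (rg_inv G x)) -mulA.
by rewrite [rg_mul G (rg_inv G x) _]mulA mulV mul1.
Qed.
Let mulr1 : right_id (rg_one G) (rg_mul G).
Proof. by move=> x; rewrite -(mulV x) mulA mulrV mul1. Qed.

Definition rg_group : Type := rg_carrier G.
HB.instance Definition _ := gen_eqMixin rg_group.
HB.instance Definition _ := gen_choiceMixin rg_group.
HB.instance Definition _ := isGroup.Build rg_group mulA mul1 mulr1 mulV mulrV.

Implicit Types (M H : rg_group -> Prop) (g s x y : rg_group).

Lemma conjugateE M g x : conjugate M g x = M (x ^ g^-1).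
Proof. by rewrite conjgE invgK mulgA. Qed.

Lemma commE x y : comm x y = [~ x, y].
Proof. by rewrite /comm /commg conjgE !mulgA. Qed.

Lemma subgroup_ext M H : (forall x, M x <-> H x) -> subgroup M -> subgroup H.
Proof.
move=> MH [M1 [MM MV]]; split; first exact/MH.
by split=> [x y /MH Mx /MH My | x /MH Mx]; apply/MH; [apply: MM | apply: MV].
Qed.

Lemma subgroupJ M s : subgroup M -> subgroup (fun x => M (x ^ s)).
Proof.
move=> [M1 [MM MV]]; split; first by rewrite conj1g.
by split=> [x y Mx My | x Mx]; [rewrite conjMg; apply: MM | rewrite conjVg; apply: MV].
Qed.

Lemma subgroup_conjugate M g : subgroup M -> subgroup (conjugate M g).
Proof.
by move=> sM; apply: subgroup_ext (subgroupJ g^-1 sM) => x; rewrite conjugateE.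
Qed.

Lemma subgroup_memJ M c x : subgroup M -> M c -> M (x ^ c) <-> M x.
Proof.
move=> [_ [MM MV]] Mc.
have MJ y d : M d -> M y -> M (y ^ d).
  by move=> Md My; rewrite conjgE; apply: MM (MV _ Md) (MM _ _ My Md).
split=> [Mxc | Mx]; last exact: MJ.
by rewrite -(conjgK c x); apply: MJ => //; apply: MV.
Qed.

Lemma malnormal_conjugate M g : malnormal M -> malnormal (conjugate M g).
Proof.
move=> malM h nMh x; change rg_group in h, x.
rewrite !conjugateE in nMh * => Mx Mxh.
have /eqP : x ^ g^-1 = 1.
  by apply: (malM _ nMh (x ^ g^-1) Mx); rewrite conjugateE -conjVg -conjJg.
by rewrite conjg_eq1 => /eqP.
Qed.

Lemma malnormal_memJ M s x :
  subgroup M -> malnormal M -> x != 1 -> M x -> M (x ^ s) -> M s.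
Proof.
move=> [_ [_ MV]] malM ntx Mx Mxs; apply: NNPP => nMs.
have nMsV : ~ M s^-1 by move=> /MV MsVV; apply: nMs; rewrite -[s]invgK.
by move/eqP: ntx; apply; apply: (malM _ nMsV x Mx); rewrite conjugateE invgK.
Qed.

Lemma derived_subgroup H : subgroup (derived H).
Proof.
split; first by move=> K [K1 _] _.
split=> [x y dx dy K sK cK | x dx K sK cK]; have [_ [KM KV]] := sK.
  by apply: KM; [apply: dx | apply: dy].
by apply: KV; apply: dx.
Qed.

Lemma derived_memJ H s x : subgroup H -> H s -> derived H x -> derived H (x ^ s).
Proof.
move=> sH Hs dx K sK cK; apply: dx (subgroupJ s sK) _ => a b Ha Hb /=.
by rewrite commE conjRg -commE; apply: cK; apply/(subgroup_memJ _ sH Hs).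
Qed.

Section FullFrobeniusComplement.
Variable B : G -> Prop.
Hypothesis HB : full_frobenius_complement B.

Let sB : subgroup B := HB.1.
Let malB : malnormal B := HB.2.2.1.
Let coverB : forall x : G, exists g, conjugate B g x := HB.2.2.2.

Definition in_conjugate H := exists g, forall x, H x -> conjugate B g x.

Lemma conjugate_memJ g s x :
  x != 1 -> conjugate B g x -> conjugate B g (x ^ s) -> conjugate B g s.
Proof.
exact: malnormal_memJ (subgroup_conjugate g sB) (malnormal_conjugate (g := g) malB).
Qed.

Lemma conjugate_meet_eq g g' x : x != 1 -> conjugate B g x -> conjugate B g' x ->
  forall z, conjugate B g z <-> conjugate B g' z.
Proof.
rewrite !conjugateE => ntx Bx Bx' z; rewrite !conjugateE.
have EJ y : y ^ g'^-1 = (y ^ g^-1) ^ (g * g'^-1) by rewrite -conjgM mulKg.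
have Bgg' : B (g * g'^-1).
  by apply: (malnormal_memJ sB malB _ Bx); rewrite ?conjg_eq1 // -EJ.
by rewrite EJ (subgroup_memJ _ sB Bgg').
Qed.

Lemma in_conjugate_trivial H : (forall x, H x -> x = 1) -> in_conjugate H.
Proof. by move=> trivH; exists 1 => x /trivH ->; case: (subgroup_conjugate 1 sB). Qed.

Lemma soluble_in_conjugate n H :
  subgroup H -> (forall x, iter n (@derived G) H x -> x = 1) -> in_conjugate H.
Proof.
elim: n H => [|n IHn] H sH trivH; first exact: in_conjugate_trivial.
have [g dHg] : in_conjugate (derived H).
  by apply: IHn (derived_subgroup H) _ => x; rewrite -iterSr; apply: trivH.
have [[x [dx ntx]] | abelianH] := classic (exists x, derived H x /\ x != 1).
  exists g => s Hs; apply: (conjugate_memJ ntx (dHg x dx)).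
  exact: dHg (derived_memJ sH Hs dx).
have cH s x : H s -> H x -> x ^ s = x.
  move=> Hs Hx; apply/conjg_fixP/negPn/negP => ntc; apply: abelianH.
  by exists [~ x, s]; rewrite -commE in ntc *; split=> // K _; apply.
have [[x [Hx ntx]] | ntH] := classic (exists x, H x /\ x != 1).
  have [h Bx] := coverB x; exists h => s Hs.
  by apply: (conjugate_memJ ntx Bx); rewrite cH.
apply: in_conjugate_trivial => x Hx.
by apply/eqP/negPn/negP => ntx; apply: ntH; exists x.
Qed.

Lemma normal_in_conjugate_trivial N :
  (exists y : G, ~ B y) -> normal N -> in_conjugate N -> forall x, N x -> x = 1.
Proof.
move=> [y nBy] [_ nN] [g Ng] x Nx; change rg_group in y.
apply/eqP/negPn/negP => ntx; apply: nBy.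
have NJ s : N (x ^ s).
  by have : conjugate N s^-1 x := nN s^-1 x Nx; rewrite conjugateE invgK.
have : conjugate B g (y ^ g) := conjugate_memJ ntx (Ng x Nx) (Ng _ (NJ _)).
by rewrite conjugateE conjgK.
Qed.

Section FiniteSubgroup.
Variable H : rg_group -> Prop.
Hypothesis sH : subgroup H.
Variable s : seq rg_group.
Hypothesis Hs : forall x, H x -> List.In x s.

Let enumH := [seq x <- s | `[< H x >]].

Let mem_enumH x : H x -> x \in enumH.
Proof. by move=> Hx; rewrite mem_filter (In_mem (Hs Hx)) andbT; apply/asboolP. Qed.

Definition fin_subgroup := seq_sub enumH.
HB.instance Definition _ := Finite.copy fin_subgroup (seq_sub enumH).

Let valH (u : fin_subgroup) : H (val u).
Proof. by have := valP u; rewrite mem_filter => /andP[/asboolP]. Qed.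

Let oneT : fin_subgroup := Sub (1 : rg_group) (mem_enumH sH.1).
Let mulT (u v : fin_subgroup) : fin_subgroup :=
  Sub (val u * val v) (mem_enumH (sH.2.1 _ _ (valH u) (valH v))).
Let invT (u : fin_subgroup) : fin_subgroup :=
  Sub (val u)^-1 (mem_enumH (sH.2.2 _ (valH u))).

Let mulTA : associative mulT.
Proof. by move=> u v w; apply: val_inj; rewrite !SubK mulgA. Qed.
Let mul1T : left_id oneT mulT.
Proof. by move=> u; apply: val_inj; rewrite !SubK mul1g. Qed.
Let mulVT : left_inverse oneT invT mulT.
Proof. by move=> u; apply: val_inj; rewrite !SubK mulVg. Qed.

HB.instance Definition _ := Finite_isGroup.Build fin_subgroup mulTA mul1T mulVT.

Let valJ (u v : fin_subgroup) : val (u ^ v) = val u ^ val v.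
Proof. by []. Qed.

Definition conjugate_trace g : {set fin_subgroup} :=
  [set u : fin_subgroup | `[< conjugate B g (val u) >]].

Lemma conjugate_trace_group g : group_set (conjugate_trace g).
Proof.
have [B1 [BM _]] := subgroup_conjugate g sB.
apply/group_setP; split=> [|u v]; rewrite !inE; first by apply/asboolP; rewrite SubK.
by move=> /asboolP Bu /asboolP Bv; apply/asboolP; rewrite SubK; apply: BM.
Qed.

Lemma finite_in_conjugate : in_conjugate H.
Proof.
have [g traceT] : exists g, Group (conjugate_trace_group g) :=: setT.
  apply: malnormal_cover_full => [u | g g' y nty | g h | g h y nty].
  - by have [g Bu] := coverB (val u); exists g; rewrite inE; apply/asboolP.
  - rewrite -(inj_eq val_inj) in nty; rewrite !inE => /asboolP By /asboolP By'.
    have EB := conjugate_meet_eq nty By By'.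
    by apply/setP=> z; rewrite !inE; apply/asboolP/asboolP => /EB.
  - exists (g * val h); apply/setP=> z; rewrite mem_conjg !inE valJ.
    by apply/asboolP/asboolP; rewrite !conjugateE -conjgM invMg.
  - rewrite !inE valJ => /asboolP By /asboolP Byh; apply/asboolP.
    by rewrite -(inj_eq val_inj) in nty; apply: conjugate_memJ nty By Byh.
exists g => x Hx.
have : (Sub x (mem_enumH Hx) : fin_subgroup) \in setT by [].
by rewrite -traceT inE SubK => /asboolP.
Qed.

End FiniteSubgroup.

End FullFrobeniusComplement.
End RankedGroup.

Theorem mainTheorem2 (G : ranked_group) (HG : finite_Morley_rank_group G)
  (B : G -> Prop) (HB : full_frobenius_complement B) (Hproper : exists x : G, ~ B x) :
  (forall H : G -> Prop, subgroup H -> finite_set H ->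
     exists g : G, forall x, H x -> conjugate B g x) /\
  (forall H : G -> Prop, soluble H ->
     exists g : G, forall x, H x -> conjugate B g x) /\
  (forall N : G -> Prop, normal N -> finite_set N -> forall x, N x -> x = rg_one G) /\
  (forall N : G -> Prop, normal N -> soluble N -> forall x, N x -> x = rg_one G).
Proof.
have groupG : is_group G := HG.1.
have finite_in K : subgroup K -> finite_set K -> in_conjugate B K.
  by move=> sK [s Ks]; exact: (finite_in_conjugate groupG HB sK Ks).
have soluble_in K : soluble K -> in_conjugate B K.
  by move=> [sK [n trivK]]; exact: (soluble_in_conjugate (HG := groupG) HB sK trivK).
have normal_trivial N : normal N -> in_conjugate B N -> forall x, N x -> x = rg_one G.
  exact: (normal_in_conjugate_trivial groupG HB Hproper).
split; first exact: finite_in.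
split; first exact: soluble_in.
split=> N nN.
  by move/(finite_in N nN.1); apply: normal_trivial.
by move/soluble_in; apply: normal_trivial.
Qed.
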